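(* For all integers $a$ and $\ell$ with $3\le a\le\ell$ there is a connected graph $F$ with $v(F)=\ell$ and $\mathrm{tw}(F)=a-1$ such that $D_{\mathrm{tw}}(F)\le a$. Specifically, $D_{\mathrm{tw}}(L_{a,b})=W_\kappa(L_{a,b})=a$ for all $a\ge3$ and $b\ge0$.
   Context: Graphs are finite simple graphs; $v(F)$ is the number of vertices and $\mathrm{tw}(F)$ the treewidth. A graph is $k$-connected if it has more than $k$ vertices, is connected, and remains connected after removal of any $k-1$ vertices; the connectivity $\kappa(G)$ is the maximum $k$ such that $G$ is $k$-connected. We use first-order logic of graphs with relation symbols for adjacency and equality only; the variable width of a sentence is the number of distinct variables it uses. For a graph parameter $\pi$, $D_\pi(F)$ (resp. $W_\pi(F)$) is the minimum quantifier depth (resp. variable width) of a first-order sentence $\Phi$ for which there is an integer $k$ such that for every connected graph $G$ with $\pi(G)\ge k$, $G\models\Phi$ if and only if $G$ contains a (not necessarily induced) subgraph isomorphic to $F$. For $a\ge3$, $b\ge1$, the lollipop graph $L_{a,b}$ is obtained from the complete graph $K_a$ and the path $P_b$ on $b$ vertices by adding an edge between an end vertex of $P_b$ and a vertex of $K_a$; by convention $L_{a,0}=K_a$. *)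

From mathcomp Require Import all_boot.
From Stdlib Require Import ClassicalEpsilon.

Set Implicit Arguments.
Unset Strict Implicit.
Unset Printing Implicit Defensive.

Record graph := Graph {
  vert : finType;
  adj : rel vert;
  adj_sym : symmetric adj;
  adj_irr : irreflexive adj }.

Definition nverts (G : graph) : nat := #|vert G|.

Definition connected (G : graph) : Prop :=
  0 < #|vert G| /\ forall x y : vert G, connect (@adj G) x y.

Definition k_connected (G : graph) (k : nat) : Prop :=
  k < #|vert G| /\ connected G /\
  forall S : {set vert G}, #|S| < k ->
    forall x y : vert G, x \notin S -> y \notin S ->
      connect [rel u v | adj u v && (u \notin S) && (v \notin S)] x y.

Definition kappa (G : graph) : nat :=
  epsilon (inhabits 0%N)
    (fun k => k_connected G k /\ forall k', k_connected G k' -> k' <= k).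

Definition subgraph (F G : graph) : Prop :=
  exists f : vert F -> vert G, injective f /\
    forall u v : vert F, adj u v -> adj (f u) (f v).

Definition is_tree (I : finType) (t : rel I) : Prop :=
  symmetric t /\ irreflexive t /\ 0 < #|I| /\
  (forall i j : I, connect t i j) /\
  ~ (exists c : seq I, 2 < size c /\ uniq c /\ cycle t c).

Definition has_tree_decomp (G : graph) (w : nat) : Prop :=
  exists (I : finType) (t : rel I) (B : I -> {set vert G}),
    [/\ is_tree t,
        (forall v : vert G, exists i, v \in B i),
        (forall u v : vert G, adj u v -> exists i, (u \in B i) && (v \in B i)),
        (forall (v : vert G) (i j : I), v \in B i -> v \in B j ->
            connect [rel x y | t x y && (v \in B x) && (v \in B y)] i j)
      & (forall i, #|B i| <= w.+1)].

Definition tw (G : graph) : nat :=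
  epsilon (inhabits 0%N)
    (fun w => has_tree_decomp G w /\ forall w', has_tree_decomp G w' -> w <= w').

Inductive form :=
| FAdj of nat & nat
| FEq of nat & nat
| FNot of form
| FAnd of form & form
| FOr of form & form
| FEx of nat & form
| FAll of nat & form.

Definition upd (T : Type) (s : nat -> T) (x : nat) (v : T) : nat -> T :=
  fun n => if n == x then v else s n.

Fixpoint sat (G : graph) (s : nat -> vert G) (f : form) : Prop :=
  match f with
  | FAdj x y => adj (s x) (s y)
  | FEq x y => s x = s y
  | FNot g => ~ sat s g
  | FAnd g h => sat s g /\ sat s h
  | FOr g h => sat s g \/ sat s h
  | FEx x g => exists v, sat (upd s x v) g
  | FAll x g => forall v, sat (upd s x v) g
  end.

Fixpoint fv (f : form) : seq nat :=
  match f with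
  | FAdj x y | FEq x y => [:: x; y]
  | FNot g => fv g
  | FAnd g h | FOr g h => fv g ++ fv h
  | FEx x g | FAll x g => filter (predC1 x) (fv g)
  end.

Definition sentence (f : form) : Prop := fv f = [::].

(** G |= Phi (for sentences, independent of the assignment) *)
Definition models (G : graph) (f : form) : Prop :=
  forall s : nat -> vert G, sat s f.

Fixpoint qdepth (f : form) : nat :=
  match f with
  | FAdj _ _ | FEq _ _ => 0
  | FNot g => qdepth g
  | FAnd g h | FOr g h => maxn (qdepth g) (qdepth h)
  | FEx _ g | FAll _ g => (qdepth g).+1
  end.

Fixpoint vars (f : form) : seq nat :=
  match f with
  | FAdj x y | FEq x y => [:: x; y]
  | FNot g => vars g
  | FAnd g h | FOr g h => vars g ++ vars h
  | FEx x g | FAll x g => x :: vars g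
  end.

Definition vwidth (f : form) : nat := size (undup (vars f)).

Definition defines_sub (pi : graph -> nat) (F : graph) (f : form) : Prop :=
  sentence f /\
  exists k : nat, forall G : graph, connected G -> k <= pi G ->
    (models G f <-> subgraph F G).

Definition D_pi (pi : graph -> nat) (F : graph) : nat :=
  epsilon (inhabits 0%N)
    (fun n => (exists f, defines_sub pi F f /\ qdepth f = n) /\
              forall f, defines_sub pi F f -> n <= qdepth f).

Definition W_pi (pi : graph -> nat) (F : graph) : nat :=
  epsilon (inhabits 0%N)
    (fun n => (exists f, defines_sub pi F f /\ vwidth f = n) /\
              forall f, defines_sub pi F f -> n <= vwidth f).

(** * Lollipop graphs L_{a,b}: vertices 0..a-1 form K_a, vertices
    a..a+b-1 form the path P_b, and the edge {a-1, a} joins the end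
    vertex a of the path to the clique vertex a-1.  L_{a,0} = K_a. *)
Definition lol_adj (a b : nat) : rel 'I_(a + b) :=
  fun u v => (u != v) &&
    ((((u < a) && (v < a)) || ((u.+1 == v) && (a <= v)))
     || ((v.+1 == u) && (a <= u))).

Lemma lol_adj_sym a b : symmetric (@lol_adj a b).
Proof.
by move=> u v; rewrite /lol_adj eq_sym (andbC (v < a)) orbAC.
Qed.

Lemma lol_adj_irr a b : irreflexive (@lol_adj a b).
Proof. by move=> u; rewrite /lol_adj eqxx. Qed.

Definition lollipop (a b : nat) : graph :=
  Graph (@lol_adj_sym a b) (@lol_adj_irr a b).

From mathcomp Require Import all_boot perm zify.
From Stdlib Require Import Classical ClassicalEpsilon.

Set Implicit Arguments.
Unset Strict Implicit.
Unset Printing Implicit Defensive.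

(* The sentence "there are a pairwise adjacent vertices", of quantifier depth and width a,
   defines L_{a,b}-containment both among connected graphs of large treewidth and among highly
   connected graphs.  A connected graph all of whose paths are short has a normal spanning tree
   of small depth, and the ancestor chains of such a tree are the bags of a narrow tree
   decomposition; hence large treewidth yields a long path starting in the clique, and on it
   some clique vertex is followed by b vertices off the clique.  High connectivity yields
   minimum degree at least a + b, so such a path can be grown greedily.
   Conversely, the complete multipartite graphs with m and with m + 1 classes of size N are
   N-connected and have treewidth at least N (every tree decomposition has a bag containing a
   closed neighbourhood), and Duplicator wins the m-pebble game on them by copying equalities
   and shared classes; but only the second one contains L_{m+1,b}. *)

Lemma ex_minimal (P : nat -> Prop) :
  (exists n, P n) -> exists n, P n /\ forall m, P m -> n <= m.
Proof.
move=> [n Pn]; elim/ltn_ind: n Pn => n IH Pn.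
have [[m [ltmn Pm]] | no_smaller] := classic (exists m, m < n /\ P m).
  exact: IH Pm.
exists n; split=> // m Pm; rewrite leqNgt; apply/negP => ltmn.
by apply: no_smaller; exists m.
Qed.

Lemma ex_maximal (P : nat -> Prop) B : (exists n, P n) -> (forall n, P n -> n <= B) ->
  exists n, P n /\ forall m, P m -> m <= n.
Proof.
move=> [n Pn] leB.
pose gap d := exists k, P k /\ d = B - k.
have [_ [[k [Pk ->]] min_gap]] := ex_minimal (ex_intro gap _ (ex_intro _ n (conj Pn erefl))).
exists k; split=> // m Pm.
have := min_gap _ (ex_intro _ m (conj Pm erefl)); have := leB m Pm; lia.
Qed.

Lemma epsilon_min_value (A : Type) (P : A -> Prop) (mu : A -> nat) x :
  P x -> (forall y, P y -> mu x <= mu y) ->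
  epsilon (inhabits 0)
    (fun n => (exists y, P y /\ mu y = n) /\ forall y, P y -> n <= mu y) = mu x.
Proof.
move=> Px min_x.
set Q := fun n => _.
have [[y [Py <-]] min_y] : Q (epsilon (inhabits 0) Q).
  by apply: epsilon_spec; exists (mu x); split=> //; exists x.
by apply/eqP; rewrite eqn_leq min_y // min_x.
Qed.

Lemma connect_mono (T : finType) (e e' : rel T) :
  subrel e e' -> subrel (connect e) (connect e').
Proof. by move=> sub_e; apply: connect_sub => x y /sub_e; apply: connect1. Qed.

Lemma fresh_elem (T : finType) (s : seq T) : size s < #|T| -> exists x, x \notin s.
Proof.
move=> small; apply: NNPP => all_in.
have : #|T| <= size s; last lia.
apply: leq_trans (card_size s); apply: subset_leq_card; apply/subsetP => x _.
by apply: NNPP => x_out; apply: all_in; exists x; apply/negP.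
Qed.

Lemma size_undup_subset (T : eqType) (A B : seq T) :
  {subset A <= B} -> size (undup A) <= size (undup B).
Proof.
by move=> AB; apply: uniq_leq_size (undup_uniq A) _ => x; rewrite !mem_undup => /AB.
Qed.

Lemma count_mem_uniq_le (T : eqType) (s l : seq T) : uniq l -> count (mem s) l <= size s.
Proof.
move=> uniq_l; rewrite -size_filter; apply: uniq_leq_size; first exact: filter_uniq.
by move=> x; rewrite mem_filter => /andP[].
Qed.

Lemma card_le_vals n (A : {set 'I_n}) (s : seq nat) :
  {in A, forall u, nat_of_ord u \in s} -> #|A| <= size s.
Proof.
move=> A_s; rewrite cardE -(size_map (@nat_of_ord n)); apply: uniq_leq_size.
  by rewrite (map_inj_uniq (@ord_inj n)) enum_uniq.
by move=> x /mapP[u u_A ->]; apply: A_s; rewrite -mem_enum.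
Qed.

Lemma run_avoiding (T : eqType) (K : pred T) b (t : seq T) y : K y ->
  (count K t).+1 * b + count K t <= size t ->
  exists u w r, [/\ t = u ++ w ++ r, size w = b, ~~ has K w & K (last y u)].
Proof.
move sz: (size t) => n; elim/ltn_ind: n t y sz => n IH t y size_t yK fit.
have count0 s : ~~ has K s -> count K s = 0.
  by move=> s_off; apply/eqP; rewrite -leqn0 leqNgt -has_count.
case: (boolP (has K t)) => [t_K | t_off]; last first.
  exists [::], (take b t), (drop b t); rewrite cat_take_drop size_takel; last first.
    by move: fit; rewrite size_t count0 //; lia.
  by split=> //; apply/hasPn => x /mem_take; apply/hasPn.
case: (split_find t_K) size_t fit => z s1 s2 Kz s1_off; rewrite -cats1 -catA /=.
rewrite size_cat count_cat count0 //= Kz => size_t fit.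
have [le_b | lt_b] := leqP b (size s1).
  exists [::], (take b s1), (drop b s1 ++ z :: s2); rewrite size_takel //.
  by rewrite /= catA cat_take_drop; split=> //; apply/hasPn => x /mem_take; apply/hasPn.
have lt_s2 : size s2 < n by rewrite -size_t; lia.
have fit2 : (count K s2).+1 * b + count K s2 <= size s2 by move: fit; nia.
have [u [w [r [-> size_w w_off Ku]]]] := IH (size s2) lt_s2 s2 z erefl Kz fit2.
exists (s1 ++ z :: u), w, r; split=> //; first by rewrite -catA.
by rewrite last_cat.
Qed.

Section Treewidth.
Variable G : graph.

Lemma has_tree_decomp_card : has_tree_decomp G #|vert G|.
Proof.
exists unit, [rel _ _ | false], (fun _ => setT); split.
- do 3 (split=> //); first by rewrite card_unit.
  split; first by move=> [] []; apply: connect0.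
  move=> [c [size_c [uniq_c _]]].
  by have := max_card (mem c); rewrite card_unit (card_uniqP uniq_c); lia.
- by move=> v; exists tt; rewrite inE.
- by move=> u v _; exists tt; rewrite !inE.
- by move=> v [] [] _ _; apply: connect0.
- by move=> _; rewrite cardsT.
Qed.

Lemma tw_spec : has_tree_decomp G (tw G) /\ forall w, has_tree_decomp G w -> tw G <= w.
Proof.
rewrite /tw; apply (epsilon_spec (inhabits 0)); apply: ex_minimal.
by exists #|vert G|; apply: has_tree_decomp_card.
Qed.

Lemma tw_le w : has_tree_decomp G w -> tw G <= w.
Proof. exact: tw_spec.2. Qed.

Lemma tw_ge k : (forall w, has_tree_decomp G w -> k <= w) -> k <= tw G.
Proof. by apply; apply: tw_spec.1. Qed.

End Treewidth.

Section Connectivity.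
Variable G : graph.
Hypothesis G_conn : connected G.

Lemma k_connectedW k j : k_connected G k -> j <= k -> k_connected G j.
Proof.
move=> [lt_k [conn sep]] le_jk; split; first lia.
by split=> // S ltS; apply: sep; lia.
Qed.

Lemma kappa_spec : k_connected G (kappa G) /\ forall k, k_connected G k -> k <= kappa G.
Proof.
rewrite /kappa; apply (epsilon_spec (inhabits 0)); apply: (@ex_maximal _ #|vert G|).
  by exists 0; split; [case: G_conn | split=> // S; rewrite ltn0].
by move=> n [/ltnW].
Qed.

Lemma kappa_ge k : k_connected G k -> k <= kappa G.
Proof. exact: kappa_spec.2. Qed.

Lemma k_connected_kappa k : k <= kappa G -> k_connected G k.
Proof. exact: k_connectedW kappa_spec.1. Qed.

End Connectivity.

Lemma k_connected_degree (G : graph) k (v : vert G) :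
  k_connected G k -> k <= #|[set u | adj v u]|.
Proof.
move=> [lt_k [_ sep]]; apply: NNPP => /negP; rewrite -ltnNge.
set S := [set u | adj v u] => small_v.
have [y y_out] : exists y, y \notin v |: S.
  apply: NNPP => all_in; have : #|vert G| <= #|v |: S|.
    apply/subset_leq_card/subsetP => y _.
    by apply: NNPP => y_out; apply: all_in; exists y; apply/negP.
  by rewrite cardsU1; have := leq_b1 (v \notin S); lia.
move: y_out; rewrite in_setU1 negb_or => /andP[y_v y_S].
have v_S : v \notin S by rewrite inE adj_irr.
have /connectP[[|z p] /= + y_last] := sep S small_v v y v_S y_S.
  by move=> _; rewrite y_last eqxx in y_v.
by case/andP => /andP[/andP[vz _] z_S] _; rewrite inE vz in z_S.
Qed.

(** * Normal spanning trees *)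

Definition rooted_depth (I : finType) (r : I) (par : I -> I) (dep : I -> nat) :=
  dep r = 0 /\ forall x, x != r -> dep x = (dep (par x)).+1.

Section ParentTree.
Variables (I : finType) (r : I) (par : I -> I) (dep : I -> nat).
Hypothesis depP : rooted_depth r par dep.

Let dep_root : dep r = 0 := depP.1.
Let dep_par : forall x, x != r -> dep x = (dep (par x)).+1 := depP.2.

Lemma depth_ind (P : I -> Prop) :
  P r -> (forall x, x != r -> P (par x) -> P x) -> forall x, P x.
Proof.
move=> Pr Ppar x; elim: {x}(dep x) {-2}x (erefl (dep x)) => [|n IH] x dep_x.
  by case: (eqVneq x r) => [-> // | x_r]; rewrite dep_par in dep_x.
case: (eqVneq x r) => [-> // | x_r]; apply: Ppar => //; apply: IH.
by move: dep_x; rewrite dep_par // => -[].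
Qed.

Definition parent_rel : rel I :=
  [rel x y | ((x != r) && (par x == y)) || ((y != r) && (par y == x))].

Lemma parent_rel_sym : symmetric parent_rel.
Proof. by move=> x y; rewrite /parent_rel /= orbC. Qed.

Lemma parent_rel_irr : irreflexive parent_rel.
Proof.
move=> x; rewrite /parent_rel /= orbb; apply/negP => /andP[x_r /eqP par_x].
by have := dep_par x_r; rewrite par_x; lia.
Qed.

Lemma parent_rel_connect x y : connect parent_rel x y.
Proof.
suff to_root z : connect parent_rel z r.
  by apply: connect_trans (to_root x) _; rewrite (sym_connect_sym parent_rel_sym).
elim/depth_ind: z => [|z z_r]; first exact: connect0.
by apply: connect_trans; apply: connect1; rewrite /parent_rel /= z_r eqxx.
Qed.

(* The deepest vertex of a cycle has two distinct cycle neighbours,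
   but only one of them can be its parent. *)
Lemma parent_rel_acyclic : ~ exists c, 2 < size c /\ uniq c /\ cycle parent_rel c.
Proof.
move=> [c [size_c [uniq_c cycle_c]]].
have [z0 z0c] : exists z, z \in c.
  by case: c size_c {uniq_c cycle_c} => // z s _; exists z; rewrite mem_head.
have [z zc max_z] : exists2 z, z \in c & forall y, y \in c -> dep y <= dep z.
  by case: (@arg_maxnP _ z0 (mem c) dep z0c) => z zc max_z; exists z.
have nb_par y : y \in c -> parent_rel z y -> y = par z.
  move=> yc /orP[/andP[_ /eqP] // | /andP[y_r /eqP par_y]].
  by have := dep_par y_r; rewrite par_y; have := max_z y yc; lia.
case: (rot_to zc) => i w rot_c.
have mem_w y : y \in w -> y \in c by move=> yw; rewrite -(mem_rot i) rot_c inE yw orbT.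
have : cycle parent_rel (z :: w) by rewrite -rot_c rot_cycle.
have : uniq (z :: w) by rewrite -rot_c rot_uniq.
have : 2 < size (z :: w) by rewrite -rot_c size_rot.
case: w rot_c mem_w => [|y1 [|y2 w]] //= _ mem_w _ /and4P[_ y1_w _ _] /andP[z_y1].
move=> /andP[_]; rewrite rcons_path => /andP[_ last_z].
have par1 : y1 = par z by apply: nb_par; [apply: mem_w; rewrite mem_head|].
have par2 : last y2 w = par z.
  by apply: nb_par; [apply: mem_w; rewrite in_cons mem_last orbT | rewrite parent_rel_sym].
by move: y1_w; rewrite par1 -par2 mem_last.
Qed.

Lemma parent_rel_tree : is_tree parent_rel.
Proof.
split; first exact: parent_rel_sym.
split; first exact: parent_rel_irr.
split; first by apply/card_gt0P; exists r.
split; first exact: parent_rel_connect.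
exact: parent_rel_acyclic.
Qed.

Definition ancestors x := traject par x (dep x).+1.

Lemma ancestors_root : ancestors r = [:: r].
Proof. by rewrite /ancestors dep_root. Qed.

Lemma ancestors_par x : x != r -> ancestors x = x :: ancestors (par x).
Proof. by move=> x_r; rewrite /ancestors dep_par. Qed.

Lemma ancestor_dep y x : y \in ancestors x -> dep y <= dep x.
Proof.
elim/depth_ind: x => [|x x_r IH]; first by rewrite ancestors_root inE => /eqP ->.
by rewrite ancestors_par // inE => /predU1P[-> // | /IH]; rewrite (dep_par x_r); lia.
Qed.

Lemma root_ancestor x : r \in ancestors x.
Proof.
elim/depth_ind: x => [|x x_r IH]; first by rewrite ancestors_root mem_head.
by rewrite ancestors_par // inE IH orbT.
Qed.

Lemma ancestors_uniq x : uniq (ancestors x).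
Proof.
elim/depth_ind: x => [|x x_r IH]; first by rewrite ancestors_root.
rewrite ancestors_par // cons_uniq IH andbT; apply/negP => /ancestor_dep.
by rewrite (dep_par x_r); lia.
Qed.

Lemma dep_lt_card x : dep x < #|I|.
Proof.
by have := card_uniqP (ancestors_uniq x); rewrite size_traject => <-; apply: max_card.
Qed.

End ParentTree.

Section NormalSpanningTree.
Variables (G : graph) (r : vert G).
Notation V := (vert G).
Notation adj := (@adj G).

Definition spanning_tree (par : V -> V) (dep : V -> nat) :=
  rooted_depth r par dep /\ forall x, x != r -> adj x (par x).

Definition normal_tree (par : V -> V) (dep : V -> nat) :=
  forall x y, adj x y -> (x \in ancestors par dep y) || (y \in ancestors par dep x).

Lemma root_path par dep x : spanning_tree par dep ->
  exists t, [/\ path adj r t, uniq (r :: t), size t = dep x, last r t = x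
              & forall y, y \in r :: t -> dep y <= dep x].
Proof.
move=> [depP par_adj]; have [dep_root dep_par] := depP.
elim/(depth_ind depP): x => [|x x_r [t [path_t uniq_t size_t last_t dep_t]]].
  by exists [::]; split=> // y; rewrite inE => /eqP ->.
have dep_x := dep_par x x_r.
exists (rcons t x); split.
- by rewrite rcons_path path_t last_t adj_sym par_adj.
- by rewrite -rcons_cons rcons_uniq uniq_t andbT; apply/negP => /dep_t; lia.
- by rewrite size_rcons size_t dep_x.
- by rewrite last_rcons.
- by move=> y; rewrite -rcons_cons mem_rcons inE => /predU1P[-> // | /dep_t]; lia.
Qed.

Hypothesis G_conn : connected G.

(* Depth = length of a shortest path from the root, parent = predecessor on such a path. *)
Lemma spanning_tree_exists : exists par dep, spanning_tree par dep.
Proof.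
pose reach n x := exists p, [/\ size p = n, path adj r p & last r p = x].
pose dist x n := reach n x /\ forall m, reach m x -> n <= m.
pose d x := epsilon (inhabits 0) (dist x).
have distP x : dist x (d x).
  apply: epsilon_spec; apply: ex_minimal.
  by have [_ /(_ r x) /connectP[p path_p ->]] := G_conn; exists (size p), p.
have parP x : exists y, x != r -> adj x y /\ d x = (d y).+1.
  case: (eqVneq x r) => [->|x_r]; first by exists r.
  have [[p [size_p path_p last_p]] min_x] := distP x.
  case/lastP: p size_p path_p last_p => [|p y] size_p.
    by move=> _ /= last_p; rewrite last_p eqxx in x_r.
  rewrite rcons_path last_rcons => /andP[path_p adj_x] y_x; subst y.
  exists (last r p) => _; split; first by rewrite adj_sym.
  have [[q [size_q path_q last_q]] min_y] := distP (last r p).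
  have : d (last r p) <= size p by apply: min_y; exists p.
  have : d x <= (d (last r p)).+1.
    apply: min_x; exists (rcons q x).
    by rewrite size_rcons size_q rcons_path path_q last_q adj_x last_rcons.
  by move: size_p; rewrite size_rcons; lia.
pose par x := epsilon (inhabits r) (fun y => x != r -> adj x y /\ d x = (d y).+1).
have par_spec x : x != r -> adj x (par x) /\ d x = (d (par x)).+1.
  exact: epsilon_spec (parP x).
exists par, d; split; last by move=> x /par_spec[].
split; last by move=> x /par_spec[].
by apply/eqP; rewrite -leqn0; apply: (distP r).2; exists [::].
Qed.

(* Hanging the subtree of [y] below [x] keeps a spanning tree and deepens all of it. *)
Lemma reparent par dep x y : spanning_tree par dep -> adj x y ->
  x \notin ancestors par dep y -> y \notin ancestors par dep x -> dep y <= dep x ->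
  exists par' dep', spanning_tree par' dep' /\ \sum_(z : V) dep z < \sum_(z : V) dep' z.
Proof.
move=> [depP par_adj] xy x_y y_x le_yx; have [dep_root dep_par] := depP.
have y_r : y != r by apply: contraNneq y_x => ->; apply: root_ancestor.
pose c := (dep x).+1 - dep y.
pose dep' z := dep z + (if y \in ancestors par dep z then c else 0).
exists (fun z => if z == y then x else par z), dep'; split.
  split; first split.
  - by rewrite /dep' ancestors_root // inE (negbTE y_r) dep_root.
  - move=> z z_r; case: (eqVneq z y) => [->|z_y].
      by rewrite /dep' (negbTE y_x) /ancestors mem_head /c; lia.
    by rewrite /dep' (ancestors_par depP z_r) inE eq_sym (negbTE z_y) dep_par.
  - by move=> z z_r; case: eqP => [->|_]; [rewrite adj_sym | apply: par_adj].
rewrite /dep' big_split /= -[X in X < _]addn0 ltn_add2l (bigD1 y) //= /ancestors mem_head.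
rewrite /c; lia.
Qed.

(* A spanning tree of maximal total depth is normal. *)
Lemma normal_spanning_tree_exists : exists par dep, spanning_tree par dep /\ normal_tree par dep.
Proof.
pose P n := exists par dep, spanning_tree par dep /\ \sum_(z : V) dep z = n.
have [n [[par [dep [treeP <-]]] max_n]] : exists n, P n /\ forall m, P m -> m <= n.
  apply: (@ex_maximal _ (#|V| * #|V|)).
    by have [par [dep treeP]] := spanning_tree_exists; exists (\sum_(z : V) dep z), par, dep.
  move=> _ [par [dep [[depP _] <-]]]; rewrite -sum_nat_const.
  by apply: leq_sum => z _; apply: ltnW; apply: dep_lt_card depP z.
exists par, dep; split=> // x y xy.
apply: contraT; rewrite negb_or => /andP[x_y y_x].
have [le_yx | /ltnW le_xy] := leqP (dep y) (dep x).
  have [par' [dep' [treeP' lt_sum]]] := reparent treeP xy x_y y_x le_yx.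
  by have := max_n _ (ex_intro _ par' (ex_intro _ dep' (conj treeP' erefl))); lia.
rewrite adj_sym in xy.
have [par' [dep' [treeP' lt_sum]]] := reparent treeP xy y_x x_y le_xy.
by have := max_n _ (ex_intro _ par' (ex_intro _ dep' (conj treeP' erefl))); lia.
Qed.

End NormalSpanningTree.

(* Normality puts both ends of every edge into the ancestor chain of the deeper one. *)
Lemma normal_tree_decomp (G : graph) (r : vert G) par dep w :
  spanning_tree r par dep -> normal_tree par dep -> (forall x, dep x <= w) ->
  has_tree_decomp G w.
Proof.
move=> [depP _] normalP le_w; have [dep_root dep_par] := depP.
pose B x := [set z in ancestors par dep x].
have self_B x : x \in B x by rewrite inE /ancestors mem_head.
exists (vert G), (parent_rel r par), B; split.
- exact: parent_rel_tree depP.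
- by move=> v; exists v.
- move=> u v /normalP /orP[uv|vu].
    by exists v; rewrite self_B andbT inE.
  by exists u; rewrite self_B inE.
- move=> v i j v_i v_j.
  pose R := [rel x y | parent_rel r par x y && (v \in B x) && (v \in B y)].
  have R_sym : symmetric R by move=> x y; rewrite /R /= parent_rel_sym andbAC.
  have to_v i' : v \in B i' -> connect R i' v.
    elim/(depth_ind depP): i' => [|x x_r IH].
      by rewrite inE ancestors_root // inE => /eqP ->; apply: connect0.
    case: (eqVneq x v) => [-> _ | x_v v_x]; first exact: connect0.
    have v_par : v \in B (par x).
      by move: v_x; rewrite !in_set (ancestors_par depP x_r) in_cons eq_sym (negbTE x_v).
    apply: connect_trans (IH v_par); apply: connect1.
    by rewrite /R /= v_x v_par /parent_rel /= x_r eqxx.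
  by apply: connect_trans (to_v i v_i) _; rewrite (sym_connect_sym R_sym) to_v.
- move=> x; rewrite cardsE; apply: leq_trans (card_size _) _.
  by rewrite size_traject ltnS.
Qed.

Lemma tree_decomp_or_long_path (G : graph) (r : vert G) w : connected G ->
  has_tree_decomp G w \/ exists t, [/\ path (@adj G) r t, uniq (r :: t) & w < size t].
Proof.
move=> G_conn; have [par [dep [treeP normalP]]] := normal_spanning_tree_exists r G_conn.
have [shallow | /not_all_ex_not[x deep_x]] := classic (forall x, dep x <= w).
  by left; apply: normal_tree_decomp treeP normalP shallow.
right; have [t [path_t uniq_t size_t _ _]] := root_path x treeP.
by exists t; split=> //; rewrite size_t; lia.
Qed.

(** * A bag containing a closed neighbourhood *)

Section Forest.
Variables (I : finType) (t : rel I).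
Hypotheses (t_sym : symmetric t) (t_irr : irreflexive t)
  (t_acyclic : ~ exists c, 2 < size c /\ uniq c /\ cycle t c).

Lemma forest_path_chord (c : seq I) l q :
  sorted t (rcons c l) -> uniq (rcons c l) -> q \in c -> t l q -> last q c = q.
Proof.
move=> sorted_c uniq_c qc lq; case/splitPr: qc sorted_c uniq_c => u w.
rewrite last_cat /= => sorted_c uniq_c.
case: w sorted_c uniq_c => [// | y w] sorted_c uniq_c; case: t_acyclic.
exists (q :: rcons (y :: w) l); split; first by rewrite /= size_rcons.
split; first by move: uniq_c; rewrite rcons_cat cat_uniq => /and3P[].
move: sorted_c; rewrite rcons_cat sorted_cat_cons => /andP[_ path_q].
by rewrite /cycle rcons_path path_q last_rcons.
Qed.

Definition induced (J : {set I}) := [rel i j | t i j && (i \in J) && (j \in J)].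

Lemma induced_edge (J : {set I}) : {in J &, forall i j, connect (induced J) i j} -> 1 < #|J| ->
  exists i k, [/\ i \in J, k \in J & t i k].
Proof.
move=> J_conn J_gt1; apply: NNPP => no_edge; move: J_gt1; rewrite ltnNge => /negP; apply.
apply/card_le1_eqP => i j iJ jJ; have /connectP[[|k s] //= + ->] := J_conn i j iJ jJ.
by case/andP => /andP[/andP[ik _] kJ] _; case: no_edge; exists i, k.
Qed.

(* The end of a longest path inside [J] has a single neighbour in [J]. *)
Lemma induced_leaf (J : {set I}) : {in J &, forall i j, connect (induced J) i j} -> 1 < #|J| ->
  exists l p, [/\ l \in J, p \in J, t l p & {in J, forall q, t l q -> q = p}].
Proof.
move=> J_conn J_gt1.
pose P n := exists x s, [/\ x \in J, all (mem J) s, path t x s, uniq (x :: s) & size s = n].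
have [n [[x [s [xJ sJ path_s uniq_s size_s]]] max_n]] :
    exists n, P n /\ forall m, P m -> m <= n.
  apply: (@ex_maximal _ #|I|).
    by have [i [_ [iJ _ _]]] := induced_edge J_conn J_gt1; exists 0, i, [::].
  move=> m [x [s [_ _ _ /card_uniqP uniq_s <-]]].
  by have := max_card (mem (x :: s)); rewrite uniq_s /=; lia.
have n_gt0 : 0 < n.
  have [i [k [iJ kJ ik]]] := induced_edge J_conn J_gt1.
  apply: max_n; exists i, [:: k]; split; rewrite /= ?kJ ?ik //.
  by rewrite inE andbT; apply: contraTneq ik => ->; rewrite t_irr.
case/lastP: s sJ path_s uniq_s size_s => [|s l].
  by move=> _ _ _ size_s; rewrite -size_s in n_gt0.
rewrite all_rcons rcons_path -rcons_cons => /andP[lJ sJ] /andP[path_s tl] uniq_s size_s.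
have pJ : last x s \in J.
  case/lastP: s sJ {path_s tl uniq_s size_s} => //= s y.
  by rewrite all_rcons last_rcons => /andP[].
exists l, (last x s); split; rewrite 1?t_sym //.
move=> q qJ lq; case q_in : (q \in rcons (x :: s) l).
  have ql : q != l by apply: contraTneq lq => ->; rewrite t_irr.
  move: q_in; rewrite mem_rcons inE (negbTE ql) /= => q_in.
  have sorted_s : sorted t (rcons (x :: s) l) by rewrite /= rcons_path path_s tl.
  by rewrite -(forest_path_chord sorted_s uniq_s q_in lq).
have : n.+1 <= n; last by rewrite ltnn.
apply: max_n; exists x, (rcons (rcons s l) q); split=> //.
- by rewrite !all_rcons; apply/and3P.
- by rewrite !rcons_path path_s tl last_rcons lq.
- by rewrite -rcons_cons rcons_uniq q_in uniq_s.
- by rewrite size_rcons size_s.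
Qed.

End Forest.

(* A simple path through [l] would have to visit [p] both before and after [l]. *)
Lemma connect_avoid (T : finType) (e : rel T) l p x y :
  (forall z, e l z -> z = p) -> (forall z, e z l -> z = p) ->
  x != l -> y != l -> connect e x y ->
  connect [rel u v | e u v && (u != l) && (v != l)] x y.
Proof.
move=> out_l in_l x_l + /connectP[q0 path_q0 y_last]; rewrite y_last.
case: (shortenP path_q0) => q path_q uniq_q _ {q0 path_q0 y_last} y_l.
have l_q : l \notin q.
  apply/negP => l_in; case/splitPr: l_in path_q uniq_q y_l => u [|z w].
    by rewrite last_cat /= eqxx.
  rewrite cat_path => /andP[_ /and3P[/in_l pre_l /out_l post_l _]].
  rewrite -cat_cons cat_uniq => /and3P[_ /hasPn z_notin _] _.
  have z_in : z \in l :: z :: w by rewrite in_cons mem_head orbT.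
  by move: (z_notin z z_in); rewrite post_l -pre_l mem_last.
apply/connectP; exists q => //; clear uniq_q y_l.
elim: q x x_l path_q l_q => //= z q IH x x_l.
rewrite inE negb_or eq_sym => /andP[xz path_q] /andP[z_l l_q].
by rewrite xz x_l z_l IH.
Qed.

Section BagWithNeighbourhood.
Variables (G : graph) (I : finType) (t : rel I) (B : I -> {set vert G}) (S : {set vert G}).
Hypotheses (t_sym : symmetric t) (t_irr : irreflexive t)
  (t_acyclic : ~ exists c, 2 < size c /\ uniq c /\ cycle t c).

Definition decomp_on (J : {set I}) := [/\ J != set0,
  {in J &, forall i j, connect (induced t J) i j},
  {in S, forall v, exists2 i, i \in J & v \in B i},
  {in S &, forall u v, adj u v -> exists2 i, i \in J & (u \in B i) && (v \in B i)}
  & {in S, forall v, {in J &, forall i j, v \in B i -> v \in B j ->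
      connect [rel x y | induced t J x y && (v \in B x) && (v \in B y)] i j}}].

Lemma decomp_on_delete_leaf J l p : decomp_on J -> l \in J -> p \in J -> t l p ->
  {in J, forall q, t l q -> q = p} -> {in S, forall v, v \in B l -> v \in B p} ->
  decomp_on (J :\ l).
Proof.
move=> [_ J_conn covS edgeS connB] lJ pJ lp leaf_l Bl_Bp.
have p_l : p != l by apply: contraTneq lp => ->; rewrite t_irr.
have J'P i : (i \in J :\ l) = (i != l) && (i \in J) by rewrite !inE.
have induced_avoid i j (e : rel I) : subrel e (induced t J) -> i \in J :\ l -> j \in J :\ l ->
    connect e i j -> connect [rel x y | e x y && (x \in J :\ l) && (y \in J :\ l)] i j.
  move=> sub_e; rewrite !J'P => /andP[i_l iJ] /andP[j_l jJ] /(connect_avoid (l := l) (p := p)).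
  have out_l z : e l z -> z = p by move/sub_e => /andP[/andP[lz _] zJ]; apply: leaf_l.
  have in_l z : e z l -> z = p.
    by move/sub_e => /andP[/andP[zl zJ] _]; apply: leaf_l; rewrite // t_sym.
  move=> /(_ out_l in_l i_l j_l); apply: connect_mono => x y /andP[/andP[exy x_l] y_l].
  by rewrite /= exy !J'P x_l y_l; case/andP: (sub_e _ _ exy) => /andP[_ ->] ->.
split.
- by apply/set0Pn; exists p; rewrite J'P p_l.
- move=> i j iJ' jJ'; move: (iJ') (jJ'); rewrite !J'P => /andP[_ iJ] /andP[_ jJ].
  apply: connect_mono (induced_avoid _ _ _ (fun _ _ => id) iJ' jJ' (J_conn i j iJ jJ)).
  by move=> x y /andP[/andP[/andP[/andP[xy _] _] xJ'] yJ']; rewrite /induced /= xy xJ' yJ'.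
- move=> v vS; have [i iJ v_i] := covS v vS.
  case: (eqVneq i l) => [i_l | i_l]; last by exists i; rewrite // J'P i_l.
  by exists p; [rewrite J'P p_l | apply: Bl_Bp; rewrite -?i_l].
- move=> u v uS vS uv; have [i iJ /andP[u_i v_i]] := edgeS u v uS vS uv.
  case: (eqVneq i l) => [i_l | i_l]; last by exists i; rewrite ?u_i // J'P i_l.
  by exists p; [rewrite J'P p_l | rewrite !Bl_Bp -?i_l].
- move=> v vS i j iJ' jJ' v_i v_j.
  move: (iJ') (jJ'); rewrite !J'P => /andP[_ iJ] /andP[_ jJ].
  have sub_e : subrel [rel x y | induced t J x y && (v \in B x) && (v \in B y)] (induced t J).
    by move=> x y /andP[/andP[]].
  apply: connect_mono (induced_avoid _ _ _ sub_e iJ' jJ' (connB v vS i j iJ jJ v_i v_j)).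
  move=> x y /andP[/andP[/andP[/andP[/andP[/andP[xy _] _] v_x] v_y] xJ'] yJ'].
  by rewrite /induced /= xy xJ' yJ' v_x v_y.
Qed.

Lemma decomp_on_closed_nbhd J : decomp_on J -> S != set0 ->
  exists2 v, v \in S & exists2 i, i \in J & {in S, forall u, (u == v) || adj v u -> u \in B i}.
Proof.
move: (leqnn #|J|); move: {2}#|J| => n; elim: n J => [|n IH] J le_Jn decJ S0.
  by case: decJ => J0; move: le_Jn; rewrite leqn0 cards_eq0 (negbTE J0).
have [J0 J_conn covS edgeS connB] := decJ.
have [v0 v0S] := set0Pn _ S0.
have [le_J1 | J_gt1] := leqP #|J| 1.
  have [i0 i0J] := set0Pn _ J0.
  have only_i0 j : j \in J -> j = i0 by move: le_J1 => /card_le1_eqP /[apply] /(_ i0 i0J).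
  exists v0 => //; exists i0 => // u uS /predU1P[-> | v0u].
    by have [j /only_i0 <-] := covS v0 v0S.
  by have [j /only_i0 <- /andP[_]] := edgeS v0 u v0S uS v0u.
have [l [p [lJ pJ lp leaf_l]]] := induced_leaf t_sym t_irr t_acyclic J_conn J_gt1.
have [[v vS [v_l only_l]] | shared] :=
  classic (exists2 v, v \in S & v \in B l /\ {in J, forall j, v \in B j -> j = l}).
  exists v => //; exists l => // u uS /predU1P[-> // | vu].
  by have [j jJ /andP[/(only_l j jJ) <-]] := edgeS v u vS uS vu.
have Bl_Bp : {in S, forall v, v \in B l -> v \in B p}.
  move=> v vS v_l; have [j [jJ v_j j_l]] : exists j, [/\ j \in J, v \in B j & j != l].
    apply: NNPP => none; apply: shared; exists v => //; split=> // j jJ v_j.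
    by apply: NNPP => j_l; apply: none; exists j; split=> //; apply/eqP.
  have /connectP[[|k q] /= + j_last] := connB v vS l j lJ jJ v_l v_j.
    by move=> _; rewrite j_last eqxx in j_l.
  by case/andP => /andP[/andP[/andP[/andP[lk _] kJ] _] v_k] _; rewrite -(leaf_l k kJ lk).
have le_J'n : #|J :\ l| <= n by move: le_Jn; rewrite (cardsD1 l J) lJ.
have [v vS [i iJ' nbhd_i]] := IH _ le_J'n (decomp_on_delete_leaf decJ lJ pJ lp leaf_l Bl_Bp) S0.
by exists v => //; exists i => //; move: iJ'; rewrite inE => /andP[].
Qed.

End BagWithNeighbourhood.

Lemma tree_decomp_width_ge (G : graph) w (S : {set vert G}) d :
  has_tree_decomp G w -> S != set0 ->
  {in S, forall v, d <= #|[set u in S | adj v u]|} -> d <= w.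
Proof.
move=> [I [t [B [[t_sym [t_irr [I_gt0 [t_conn t_acyclic]]]] covG edgeG connB size_B]]]] S0 deg_S.
have decT : decomp_on t B S setT.
  split.
  - by apply/set0Pn; have /card_gt0P[i _] := I_gt0; exists i; rewrite inE.
  - by move=> i j _ _; apply: connect_mono (t_conn i j) => x y xy; rewrite /induced /= xy !inE.
  - by move=> v _; have [i v_i] := covG v; exists i; rewrite ?inE.
  - by move=> u v _ _ /edgeG[i uv_i]; exists i; rewrite ?inE.
  - move=> v _ i j _ _ v_i v_j; apply: connect_mono (connB v i j v_i v_j).
    by move=> x y /andP[/andP[xy v_x v_y]]; rewrite /induced /= xy v_x v_y !inE.
have [v vS [i _ nbhd_i]] := decomp_on_closed_nbhd t_sym t_irr t_acyclic decT S0.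
have sub_i : v |: [set u in S | adj v u] \subset B i.
  apply/subsetP => u; rewrite !inE => /predU1P[-> | /andP[uS vu]].
    by apply: nbhd_i; rewrite ?eqxx.
  by apply: nbhd_i; rewrite ?vu ?orbT.
have := subset_leq_card sub_i; rewrite cardsU1 inE adj_irr andbF /=.
by have := size_B i; have := deg_S v vS; lia.
Qed.

(** * Complete multipartite graphs *)

Definition multipartite_adj (m N : nat) : rel ('I_m * 'I_N) := fun x y => x.1 != y.1.

Lemma multipartite_adj_sym m N : symmetric (@multipartite_adj m N).
Proof. by move=> x y; rewrite /multipartite_adj eq_sym. Qed.

Lemma multipartite_adj_irr m N : irreflexive (@multipartite_adj m N).
Proof. by move=> x; rewrite /multipartite_adj eqxx. Qed.

Definition multipartite (m N : nat) : graph :=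
  Graph (@multipartite_adj_sym m N) (@multipartite_adj_irr m N).

Section PartialIso.
Variables (N m1 m2 : nat).
Notation G1 := (multipartite m1 N).
Notation G2 := (multipartite m2 N).

(* Adjacency in a complete multipartite graph only depends on which vertices share a class. *)
Definition partial_iso (X : seq nat) (s : nat -> vert G1) (t : nat -> vert G2) :=
  {in X &, forall y z,
    ((s y == s z) = (t y == t z)) /\ (((s y).1 == (s z).1) = ((t y).1 == (t z).1))}.

Lemma partial_iso_sub X Y s t : partial_iso X s t -> {subset Y <= X} -> partial_iso Y s t.
Proof. by move=> isoX YX y z /YX yX /YX zX; apply: isoX. Qed.

Lemma partial_iso_answer X s t v : partial_iso X s t ->
  size (undup X) < m2 -> size (undup X) < N ->
  exists w : vert G2,
    {in X, forall z, ((v == s z) = (w == t z)) /\ ((v.1 == (s z).1) = (w.1 == (t z).1))}.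
Proof.
move=> isoX X_m2 X_N.
have [[y yX <-] | v_new] := classic (exists2 y, y \in X & s y = v).
  by exists (t y) => z zX; apply: isoX.
have v_ne z : z \in X -> (v == s z) = false.
  by move=> zX; apply/eqP => vz; apply: v_new; exists z; rewrite // vz.
have [[y yX class_y] | class_new] := classic (exists2 y, y \in X & (s y).1 = v.1).
  have [j j_new] : exists j : 'I_N, j \notin [seq (t z).2 | z <- undup X].
    by apply: fresh_elem; rewrite size_map card_ord.
  exists ((t y).1, j) => z zX; rewrite v_ne //; split.
    apply/esym/eqP => /(congr1 snd) /= jz; move: j_new; rewrite jz.
    by move/negP; apply; apply/mapP; exists z; rewrite ?mem_undup.
  by rewrite -class_y /=; have [] := isoX y z yX zX.
have [c c_new] : exists c : 'I_m2, c \notin [seq (t z).1 | z <- undup X].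
  by apply: fresh_elem; rewrite size_map card_ord.
have [j0 _] : exists j : 'I_N, true by case: N X_N => [|n] // _; exists ord0.
exists (c, j0) => z zX; rewrite v_ne //.
have c_ne : (c == (t z).1) = false.
  apply/eqP => cz; move: c_new; rewrite cz => /negP; apply.
  by apply/mapP; exists z; rewrite ?mem_undup.
have v_class : (v.1 == (s z).1) = false by apply/eqP => vz; apply: class_new; exists z.
split; last by rewrite /= c_ne v_class.
by apply/esym/eqP => cz; move: c_ne; rewrite -cz eqxx.
Qed.

Lemma partial_iso_extend X s t x v : partial_iso X s t ->
  size (undup X) < m2 -> size (undup X) < N -> x \notin X ->
  exists w, partial_iso (x :: X) (upd s x v) (upd t x w).
Proof.
move=> isoX X_m2 X_N xX.
have upd_X (T : Type) (f : nat -> T) a z : z \in X -> upd f x a z = f z.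
  by move=> zX; rewrite /upd; case: eqP => // zx; rewrite -zx zX in xX.
have upd_x (T : Type) (f : nat -> T) a : upd f x a x = a by rewrite /upd eqxx.
have [w w_ans] := partial_iso_answer v isoX X_m2 X_N.
exists w => y z; rewrite !inE => /predU1P[-> | yX] /predU1P[-> | zX].
- by rewrite !upd_x !eqxx.
- by rewrite !upd_x !upd_X //; apply: w_ans.
- rewrite !upd_x !upd_X // ![_ == v]eq_sym ![_ == w]eq_sym ![_ == v.1]eq_sym ![_ == w.1]eq_sym.
  exact: w_ans.
- by rewrite !upd_X //; apply: isoX.
Qed.

End PartialIso.

Lemma partial_iso_sym N m1 m2 X s t :
  @partial_iso N m1 m2 X s t -> @partial_iso N m2 m1 X t s.
Proof. by move=> isoX y z yX zX; have [-> ->] := isoX y z yX zX. Qed.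

(* Duplicator can always answer while fewer than [k] elements are pebbled; a formula
   fits a budget [k] at pebbled variables [X] if either its remaining quantifier depth
   or its variables bound the number of pebbles that will ever be on the board. *)
Definition fits_budget (k : nat) (X : seq nat) (f : form) :=
  size (undup X) + qdepth f <= k \/ size (undup (X ++ vars f)) <= k.

Lemma fits_budget_split k X g h :
  fits_budget k X (FAnd g h) -> fits_budget k X g /\ fits_budget k X h.
Proof.
have sub_l : {subset X ++ vars g <= X ++ (vars g ++ vars h)}.
  by move=> z; rewrite !mem_cat => /orP[] ->; rewrite ?orbT.
have sub_r : {subset X ++ vars h <= X ++ (vars g ++ vars h)}.
  by move=> z; rewrite !mem_cat => /orP[] ->; rewrite ?orbT.
move=> [fit | fit]; split; [left | left | right | right]; move: fit => /=; try lia.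
  by apply: leq_trans; apply: size_undup_subset sub_l.
by apply: leq_trans; apply: size_undup_subset sub_r.
Qed.

Lemma fits_budget_quant k X x g (Y := [seq z <- X | z != x]) :
  fits_budget k X (FEx x g) -> size (undup Y) < k /\ fits_budget k (x :: Y) g.
Proof.
have YX : {subset Y <= X} by move=> z; rewrite mem_filter => /andP[].
have xY : x \notin Y by rewrite mem_filter eqxx.
have undup_xY : size (undup (x :: Y)) = (size (undup Y)).+1 by rewrite /= (negbTE xY).
have sub_xY : {subset x :: Y <= X ++ x :: vars g}.
  by move=> z; rewrite inE mem_cat => /predU1P[-> | /YX ->]; rewrite ?inE ?eqxx ?orbT.
clearbody Y; move=> [fit | fit]; move: fit => /= fit.
  have le_YX := size_undup_subset YX; split.
    by apply: leq_ltn_trans le_YX _; apply: leq_trans fit; rewrite addnS ltnS leq_addr.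
  by left; rewrite undup_xY addSn -addnS; apply: leq_trans fit; rewrite leq_add2r.
have le_xY := size_undup_subset sub_xY; rewrite undup_xY in le_xY.
split; first exact: leq_trans le_xY fit.
right; apply: leq_trans fit; apply: size_undup_subset => z.
by rewrite mem_cat => /orP[/sub_xY // | zg]; rewrite mem_cat inE zg !orbT.
Qed.

Section MultipartiteGame.
Variables (k N m1 m2 : nat).
Hypotheses (k_N : k <= N) (k_m1 : k <= m1) (k_m2 : k <= m2).
Notation G1 := (multipartite m1 N).
Notation G2 := (multipartite m2 N).

Lemma partial_iso_step X (s : nat -> vert G1) (t : nat -> vert G2) x :
  partial_iso X s t -> size (undup X) < k -> x \notin X ->
  (forall v, exists w, partial_iso (x :: X) (upd s x v) (upd t x w)) /\
  (forall w, exists v, partial_iso (x :: X) (upd s x v) (upd t x w)).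
Proof.
move=> isoX X_k xX; split=> [v | w].
  by apply: partial_iso_extend; rewrite // (leq_trans X_k).
have [v isoXv] :=
  partial_iso_extend w (partial_iso_sym isoX) (leq_trans X_k k_m1) (leq_trans X_k k_N) xX.
by exists v; apply: partial_iso_sym.
Qed.

Lemma partial_iso_quant X (s : nat -> vert G1) (t : nat -> vert G2) x g :
  {subset fv (FEx x g) <= X} -> partial_iso X s t -> fits_budget k X (FEx x g) ->
  exists Y, [/\ {subset fv g <= x :: Y}, fits_budget k (x :: Y) g,
    forall v, exists w, partial_iso (x :: Y) (upd s x v) (upd t x w)
    & forall w, exists v, partial_iso (x :: Y) (upd s x v) (upd t x w)].
Proof.
move=> fvX isoX /fits_budget_quant[Y_k fitY].
have isoY := partial_iso_sub isoX (mem_subseq (filter_subseq (predC1 x) X)).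
have xY : x \notin [seq z <- X | z != x] by rewrite mem_filter eqxx.
have [forth back] := partial_iso_step isoY Y_k xY.
exists [seq z <- X | z != x]; split=> // z zg; rewrite inE; case: (eqVneq z x) => //= z_x.
by rewrite mem_filter z_x fvX // mem_filter /= z_x.
Qed.

Lemma sat_multipartite_iff f : forall X (s : nat -> vert G1) (t : nat -> vert G2),
  {subset fv f <= X} -> partial_iso X s t -> fits_budget k X f -> (sat s f <-> sat t f).
Proof.
elim: f => [x y | x y | g IH | g IHg h IHh | g IHg h IHh | x g IH | x g IH] X s t fvX isoX fit /=.
- have xX : x \in X by apply: fvX; rewrite inE eqxx.
  have yX : y \in X by apply: fvX; rewrite !inE eqxx orbT.
  by have [_ class_xy] := isoX x y xX yX; rewrite /multipartite_adj class_xy.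
- have xX : x \in X by apply: fvX; rewrite inE eqxx.
  have yX : y \in X by apply: fvX; rewrite !inE eqxx orbT.
  by have [eq_xy _] := isoX x y xX yX; split=> /eqP; [rewrite eq_xy | rewrite -eq_xy] => /eqP.
- by rewrite (IH X s t fvX isoX fit).
- have [fit_g fit_h] := fits_budget_split fit.
  have fv_g : {subset fv g <= X} by move=> z zg; apply: fvX; rewrite mem_cat zg.
  have fv_h : {subset fv h <= X} by move=> z zh; apply: fvX; rewrite mem_cat zh orbT.
  by rewrite (IHg X s t fv_g isoX fit_g) (IHh X s t fv_h isoX fit_h).
- have [fit_g fit_h] := fits_budget_split (fit : fits_budget k X (FAnd g h)).
  have fv_g : {subset fv g <= X} by move=> z zg; apply: fvX; rewrite mem_cat zg.
  have fv_h : {subset fv h <= X} by move=> z zh; apply: fvX; rewrite mem_cat zh orbT.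
  by rewrite (IHg X s t fv_g isoX fit_g) (IHh X s t fv_h isoX fit_h).
- have [Y [fvY fitY forth back]] := partial_iso_quant fvX isoX fit.
  split=> [[v sat_v] | [w sat_w]].
    by have [w isoY] := forth v; exists w; apply/(IH _ _ _ fvY isoY fitY).
  by have [v isoY] := back w; exists v; apply/(IH _ _ _ fvY isoY fitY).
- have [Y [fvY fitY forth back]] := partial_iso_quant fvX isoX fit.
  split=> sat_all v.
    by have [w isoY] := back v; apply/(IH _ _ _ fvY isoY fitY).
  by have [w isoY] := forth v; apply/(IH _ _ _ fvY isoY fitY).
Qed.

End MultipartiteGame.

Lemma models_multipartite_iff k N m1 m2 f : 0 < k -> k <= N -> k <= m1 -> k <= m2 ->
  sentence f -> qdepth f <= k \/ vwidth f <= k ->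
  (models (multipartite m1 N) f <-> models (multipartite m2 N) f).
Proof.
move=> k_gt0 k_N k_m1 k_m2 closed_f fit_f.
have j0 : 'I_N := Ordinal (leq_trans k_gt0 k_N).
have v1 : vert (multipartite m1 N) := (Ordinal (leq_trans k_gt0 k_m1), j0).
have v2 : vert (multipartite m2 N) := (Ordinal (leq_trans k_gt0 k_m2), j0).
have fv_f : {subset fv f <= [::]} by rewrite closed_f.
have iso0 s t : @partial_iso N m1 m2 [::] s t by [].
have fit0 : fits_budget k [::] f by [].
split=> sat_f s.
  exact: (sat_multipartite_iff k_N k_m1 k_m2 fv_f (iso0 (fun _ => v1) s) fit0).1 (sat_f _).
exact: (sat_multipartite_iff k_N k_m1 k_m2 fv_f (iso0 s (fun _ => v2)) fit0).2 (sat_f _).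
Qed.

Definition has_clique (G : graph) (a : nat) :=
  exists f : 'I_a -> vert G, forall i j, i != j -> adj (f i) (f j).

Section MultipartiteProperties.
Variables (m N : nat).
Hypotheses (m_gt1 : 1 < m) (N_gt0 : 0 < N).
Notation K := (multipartite m N).

Lemma other_class (c : 'I_m) : exists d : 'I_m, d != c.
Proof.
have [d] : exists d : 'I_m, d \notin [:: c] by apply: fresh_elem; rewrite card_ord.
by rewrite inE; exists d.
Qed.

Lemma multipartite_degree (v : vert K) : N <= #|[set u | adj v u]|.
Proof.
have [d d_v] := other_class v.1.
apply: (@leq_trans #|[set ((d, j) : vert K) | j : 'I_N]|).
  by rewrite card_imset ?cardsT ?card_ord // => j1 j2 [].
by apply/subset_leq_card/subsetP => u /imsetP[j _ ->]; rewrite inE /= /multipartite_adj eq_sym.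
Qed.

(* Two vertices of the same class are joined through any of the [N] vertices of another class. *)
Lemma multipartite_k_connected : k_connected K N.
Proof.
have card_K : N < #|vert K| by rewrite card_prod !card_ord; nia.
have sep (S : {set vert K}) : #|S| < N -> forall x y, x \notin S -> y \notin S ->
    connect [rel u v | adj u v && (u \notin S) && (v \notin S)] x y.
  move=> S_N x y xS yS; case: (eqVneq x.1 y.1) => [xy | xy].
    have [d d_x] := other_class x.1.
    have [j j_new] : exists j : 'I_N, j \notin [seq z.2 | z <- enum S].
      by apply: fresh_elem; rewrite size_map -cardE card_ord.
    have dj_S : ((d, j) : vert K) \notin S.
      by apply: contra j_new => djS; apply/mapP; exists (d, j); rewrite ?mem_enum.
    apply: (@connect_trans _ _ ((d, j) : vert K)); apply: connect1.
      by rewrite /= /multipartite_adj /= eq_sym d_x xS dj_S.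
    by rewrite /= /multipartite_adj /= -xy d_x dj_S yS.
  by apply: connect1; rewrite /= /multipartite_adj xy xS yS.
split=> //; split=> //; split; first exact: ltn_trans N_gt0 card_K.
move=> x y; apply: connect_mono (sep set0 _ x y _ _); rewrite ?cards0 ?inE //.
by move=> u v /andP[/andP[]].
Qed.

Lemma multipartite_connected : connected K.
Proof. by case: multipartite_k_connected => _ []. Qed.

Lemma multipartite_tw_ge : N <= tw K.
Proof.
apply: tw_ge => w decK; apply: (@tree_decomp_width_ge _ _ setT _ decK).
  by apply/set0Pn; exists (Ordinal (ltnW m_gt1), Ordinal N_gt0); rewrite inE.
move=> v _; apply: leq_trans (multipartite_degree v) _.
by apply/subset_leq_card/subsetP => u; rewrite !inE.
Qed.

Lemma multipartite_kappa_ge : N <= kappa K.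
Proof. by have := kappa_ge multipartite_connected; apply; apply: multipartite_k_connected. Qed.

Lemma multipartite_clique : has_clique K m.
Proof. by exists (fun i => ((i, Ordinal N_gt0) : vert K)). Qed.

End MultipartiteProperties.

Lemma multipartite_no_clique m N : ~ has_clique (multipartite m N) m.+1.
Proof.
move=> [f f_clique].
have inj_class : injective (fun i => (f i).1).
  move=> i j fij; apply/eqP/negPn/negP => /f_clique.
  by rewrite /= /multipartite_adj fij eqxx.
by have := leq_card _ inj_class; rewrite !card_ord ltnn.
Qed.

Lemma sat_ext (G : graph) f (s s' : nat -> vert G) : s =1 s' -> sat s f -> sat s' f.
Proof.
elim: f s s' => [x y | x y | g IH | g IHg h IHh | g IHg h IHh | x g IH | x g IH] s s' ss' /=.
- by rewrite !ss'.
- by rewrite !ss'.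
- by move=> not_g /(IH s' s (fsym ss')).
- by move=> [/(IHg s s' ss') ? /(IHh s s' ss')].
- by move=> [/(IHg s s' ss') | /(IHh s s' ss')]; [left | right].
- move=> [v /IH sat_v]; exists v; apply: sat_v => n.
  by rewrite /upd; case: ifP.
- move=> sat_all v; apply: IH (sat_all v) => n.
  by rewrite /upd; case: ifP.
Qed.

Lemma sat_exists (G : graph) (s : nat -> vert G) f l :
  sat s (foldr FEx f l) <-> exists g, sat (fun n => if n \in l then g n else s n) f.
Proof.
elim: l s => [|x l IH] s /=.
  by split=> [sat_f | [g]]; [exists s | ]; apply: sat_ext.
split=> [[v /IH[g sat_g]] | [g sat_g]].
  exists (fun y => if y \in l then g y else v); apply: sat_ext sat_g => n.
  by rewrite inE /upd; case: (eqVneq n x) => [-> |] /=; case: ifP.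
exists (g x); apply/IH; exists g; apply: sat_ext sat_g => n.
by rewrite inE /upd; case: (eqVneq n x) => [-> |] /=; case: ifP.
Qed.

Definition clique_pairs a :=
  [seq (i, j) | i <- iota 0 a, j <- [seq j <- iota 0 a | j != i]].

Definition adj_all (l : seq (nat * nat)) :=
  foldr (fun ij f => FAnd (FAdj ij.1 ij.2) f) (FEq 0 0) l.

Definition clique_form a := foldr FEx (adj_all (clique_pairs a)) (iota 0 a).

Lemma mem_clique_pairs a i j : ((i, j) \in clique_pairs a) = [&& i < a, j < a & j != i].
Proof.
apply/allpairsPdep/idP => [[x [y [+ + [-> ->]]]] | /and3P[ia ja ji]].
  by rewrite mem_filter !mem_iota /= !add0n => -> /andP[-> ->].
by exists i, j; rewrite mem_filter !mem_iota /= !add0n ia ja ji.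
Qed.

Lemma sat_adj_all (G : graph) (s : nat -> vert G) l :
  sat s (adj_all l) <-> forall ij, ij \in l -> adj (s ij.1) (s ij.2).
Proof.
elim: l => [|ij l IH] /=; first by split.
rewrite IH; split=> [[adj_ij adj_l] kl | adj_l].
  by rewrite inE => /predU1P[-> | /adj_l].
by split=> [|kl kl_l]; apply: adj_l; rewrite inE ?eqxx ?kl_l ?orbT.
Qed.

Lemma qdepth_adj_all l : qdepth (adj_all l) = 0.
Proof. by elim: l => //= ij l ->. Qed.

Lemma fv_adj_all l : fv (adj_all l) = vars (adj_all l).
Proof. by elim: l => //= ij l ->. Qed.

Lemma vars_clique_pairs a : 0 < a -> {subset vars (adj_all (clique_pairs a)) <= iota 0 a}.
Proof.
move=> a_gt0; have : {in clique_pairs a, forall ij, (ij.1 < a) && (ij.2 < a)}.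
  by move=> [i j]; rewrite mem_clique_pairs => /and3P[-> -> _].
elim: (clique_pairs a) => [|[i j] l IH] /= bounded z.
  by rewrite !inE orbb => /eqP ->; rewrite mem_iota.
have /andP[ia ja] := bounded (i, j) (mem_head _ _).
rewrite !inE => /or3P[/eqP -> | /eqP -> | zl]; try by rewrite mem_iota.
have bounded_l : {in l, forall ij, (ij.1 < a) && (ij.2 < a)}.
  by move=> ij ij_l; apply: bounded; rewrite inE ij_l orbT.
exact: IH bounded_l z zl.
Qed.

Lemma qdepth_exists f l : qdepth (foldr FEx f l) = size l + qdepth f.
Proof. by elim: l => //= x l ->. Qed.

Lemma vars_exists f l : vars (foldr FEx f l) = l ++ vars f.
Proof. by elim: l => //= x l ->. Qed.

Lemma fv_exists f l : fv (foldr FEx f l) = [seq n <- fv f | n \notin l].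
Proof.
elim: l => [|x l IH] /=; first by rewrite filter_predT.
by rewrite IH -filter_predI; apply: eq_filter => n /=; rewrite inE negb_or andbC.
Qed.

Lemma clique_form_sentence a : 0 < a -> sentence (clique_form a).
Proof.
move=> a_gt0; rewrite /sentence /clique_form fv_exists fv_adj_all.
apply/eqP; rewrite -[_ == [::]]negbK -has_filter; apply/hasPn => z z_vars /=.
by rewrite (vars_clique_pairs a_gt0 z_vars).
Qed.

Lemma qdepth_clique_form a : qdepth (clique_form a) = a.
Proof. by rewrite /clique_form qdepth_exists qdepth_adj_all size_iota addn0. Qed.

Lemma vwidth_clique_form a : 0 < a -> vwidth (clique_form a) = a.
Proof.
move=> a_gt0; rewrite /vwidth /clique_form vars_exists.
have -> : size (undup (iota 0 a ++ vars (adj_all (clique_pairs a)))) = size (undup (iota 0 a)).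
  apply/perm_size/uniq_perm; rewrite ?undup_uniq // => z.
  rewrite !mem_undup mem_cat; case z_vars : (z \in vars _); last by rewrite orbF.
  by rewrite (vars_clique_pairs a_gt0 z_vars).
by rewrite undup_id ?iota_uniq // size_iota.
Qed.

Lemma models_clique_form (G : graph) a : 0 < a -> 0 < #|vert G| ->
  models G (clique_form a) <-> has_clique G a.
Proof.
move=> a_gt0 /card_gt0P[x0 _]; split.
  move=> /(_ (fun _ => x0)) /sat_exists[g /sat_adj_all adj_g].
  exists (fun i => g i) => i j ij.
  have ij_pair : (val i, val j) \in clique_pairs a by rewrite mem_clique_pairs !ltn_ord eq_sym.
  by have := adj_g _ ij_pair; rewrite /= !mem_iota !add0n !ltn_ord.
move=> [f f_clique] s; apply/sat_exists.
pose i0 : 'I_a := Ordinal a_gt0.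
exists (fun n => f (insubd i0 n)); apply/sat_adj_all => -[i j].
rewrite mem_clique_pairs /= => /and3P[ia ja ji].
rewrite !mem_iota !add0n ia ja; apply: f_clique.
by apply: contraNneq ji => /(congr1 val); rewrite !val_insubd ia ja => ->.
Qed.

Lemma lollipop_clique (G : graph) a b : subgraph (lollipop a b) G -> has_clique G a.
Proof.
move=> [g [g_inj g_adj]]; exists (fun i => g (lshift b i)) => i j ij; apply: g_adj.
rewrite /= /lol_adj /= !ltn_ord /= andbT; apply: contra ij => /eqP/(congr1 val) /= ij.
by apply/eqP/val_inj.
Qed.

Section LollipopEmbedding.
Variables (G : graph) (a b : nat) (f : 'I_a.+1 -> vert G) (p : seq (vert G)).
Hypotheses (f_clique : forall i j, i != j -> adj (f i) (f j))
  (size_p : size p = b) (uniq_p : uniq p) (path_p : path (@adj G) (f ord_max) p)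
  (p_off : {in p, forall x, x \notin codom f}).

(* Vertices [0 .. a] go to the clique, with [a] at [f ord_max],
   and vertex [a + 1 + k] to the [k]-th vertex of [p]. *)
Definition lollipop_map (u : 'I_(a.+1 + b)) : vert G :=
  if u <= a then f (inord u) else nth (f ord_max) p (u - a.+1).

Lemma lollipop_map_tail (u : 'I_(a.+1 + b)) :
  a <= u -> lollipop_map u = nth (f ord_max) (f ord_max :: p) (u - a).
Proof.
rewrite leq_eqVlt /lollipop_map => /predU1P[<- | lt_au].
  by rewrite leqnn subnn; congr f; apply: val_inj; rewrite /= inordK.
by rewrite leqNgt lt_au; have -> : u - a = (u - a.+1).+1 by lia.
Qed.

Lemma lollipop_map_inj : injective lollipop_map.
Proof.
have f_inj : injective f.
  by move=> i j fij; apply/eqP/negPn/negP => /f_clique; rewrite fij adj_irr.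
have in_p (u : 'I_(a.+1 + b)) : a < u -> nth (f ord_max) p (u - a.+1) \in p.
  by move=> lt_au; apply: mem_nth; rewrite size_p; have := ltn_ord u; lia.
move=> u v; rewrite /lollipop_map.
case: (leqP u a) => [le_ua | lt_au]; case: (leqP v a) => [le_va | lt_av].
- by move=> /f_inj/(congr1 val); rewrite /= !inordK // => /val_inj.
- by move=> fu; have := p_off (in_p v lt_av); rewrite -fu codom_f.
- by move=> fv; have := p_off (in_p u lt_au); rewrite fv codom_f.
- have lt_u : u - a.+1 < size p by rewrite size_p; have := ltn_ord u; lia.
  have lt_v : v - a.+1 < size p by rewrite size_p; have := ltn_ord v; lia.
  move/eqP; rewrite (nth_uniq _ lt_u lt_v uniq_p) => /eqP uv.
  by apply: ord_inj; lia.
Qed.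

Lemma lollipop_map_adj u v : lol_adj u v -> adj (lollipop_map u) (lollipop_map v).
Proof.
have path_adj (x y : 'I_(a.+1 + b)) : x.+1 = y -> a < y -> adj (lollipop_map x) (lollipop_map y).
  move=> xy lt_ay; have le_ax : a <= x by lia.
  rewrite (lollipop_map_tail le_ax) (lollipop_map_tail (ltnW lt_ay)).
  have -> : y - a = (x - a).+1 by lia.
  have lt_p : x - a < size p by rewrite size_p; have := ltn_ord y; lia.
  by move/(pathP (f ord_max)): path_p => /(_ _ lt_p).
move=> /andP[uv /orP[/orP[/andP[lt_ua lt_va] | /andP[/eqP uv1 lt_av]] | /andP[/eqP vu1 lt_au]]].
- rewrite /lollipop_map (ltnSE lt_ua) (ltnSE lt_va); apply: f_clique.
  by apply: contra uv => /eqP/(congr1 val); rewrite /= !inordK // => /val_inj ->.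
- exact: path_adj.
- by rewrite adj_sym; apply: path_adj.
Qed.

End LollipopEmbedding.

Lemma lollipop_subgraph_last (G : graph) a b (f : 'I_a.+1 -> vert G) (p : seq (vert G)) :
  (forall i j, i != j -> adj (f i) (f j)) -> size p = b -> uniq p ->
  path (@adj G) (f ord_max) p -> {in p, forall x, x \notin codom f} ->
  subgraph (lollipop a.+1 b) G.
Proof.
move=> f_clique size_p uniq_p path_p p_off; exists (lollipop_map f p); split.
  exact: lollipop_map_inj.
exact: lollipop_map_adj.
Qed.

Lemma lollipop_subgraph (G : graph) a b (f : 'I_a.+1 -> vert G) j (p : seq (vert G)) :
  (forall i k, i != k -> adj (f i) (f k)) -> size p = b -> uniq p ->
  path (@adj G) (f j) p -> {in p, forall x, x \notin codom f} ->
  subgraph (lollipop a.+1 b) G.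
Proof.
move=> f_clique size_p uniq_p path_p p_off.
apply: (@lollipop_subgraph_last _ _ _ (f \o tperm j ord_max)) size_p uniq_p _ _.
- by move=> i k ik; apply: f_clique; apply: contra ik => /eqP/perm_inj ->.
- by rewrite /= tpermR.
- by move=> x /p_off; apply: contra => /codomP[i ->]; apply: codom_f.
Qed.

Lemma greedy_path (G : graph) (A : seq (vert G)) q n :
  (forall v : vert G, size A + n <= #|[set u | adj v u]|) ->
  exists p, [/\ size p = n, uniq p, path (@adj G) q p & {in p, forall x, x \notin A}].
Proof.
elim: n => [|n IH] deg; first by exists [::].
have [p [size_p uniq_p path_p p_off]] : exists p, [/\ size p = n, uniq p, path (@adj G) q p
    & {in p, forall x, x \notin A}] by apply: IH => v; apply: leq_trans (deg v); rewrite leq_add2l.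
have [z] : exists z, (z \in [set u | adj (last q p) u]) && (z \notin A ++ p).
  apply: NNPP => none; have := deg (last q p); apply/negP; rewrite -ltnNge.
  apply: leq_ltn_trans (_ : _ <= size (A ++ p)) _; last by rewrite size_cat size_p addnS.
  apply: leq_trans (card_size (A ++ p)); apply/subset_leq_card/subsetP => z z_nb.
  by apply: NNPP => z_out; apply: none; exists z; rewrite z_nb; apply/negP.
rewrite inE mem_cat negb_or => /and3P[last_z zA zp].
exists (rcons p z); split.
- by rewrite size_rcons size_p.
- by rewrite rcons_uniq zp.
- by rewrite rcons_path path_p.
- by move=> x; rewrite mem_rcons inE => /predU1P[-> | /p_off].
Qed.

Section Lollipop.
Variables (a b : nat).
Hypothesis a_gt1 : 1 < a.
Notation L := (lollipop a b).

Lemma lollipop_connected : connected L.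
Proof.
have ab_gt0 : 0 < a + b by lia.
pose z0 : 'I_(a + b) := Ordinal ab_gt0.
have to_z0 (u : 'I_(a + b)) : connect (@adj L) u z0.
  move: {2}(nat_of_ord u) (erefl (nat_of_ord u)) => n; elim/ltn_ind: n u => n IH u un.
  case: (eqVneq u z0) => [-> | u_z0]; first exact: connect0.
  case: (ltnP u a) => [lt_ua | le_au].
    by apply: connect1; rewrite /= /lol_adj u_z0 /= lt_ua; lia.
  have pred_u : u.-1 < a + b by have := ltn_ord u; lia.
  apply: (@connect_trans _ _ (Ordinal pred_u)); last by apply: (IH u.-1) => //; lia.
  apply: connect1; rewrite /= /lol_adj; apply/andP; split.
    by apply/eqP => /(congr1 val) /=; lia.
  by apply/orP; right; apply/andP; split=> //; apply/eqP => /=; lia.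
split; first by rewrite card_ord.
by move=> x y; apply: connect_trans (to_z0 x) _; rewrite (sym_connect_sym (@adj_sym L)) to_z0.
Qed.

(* Node [0] carries the clique, node [j > 0] the edge [{a + j - 2, a + j - 1}]. *)
Definition lollipop_bag (j : 'I_b.+1) : {set 'I_(a + b)} :=
  [set u : 'I_(a + b) | if j == 0 :> nat then u < a else a + j <= u.+2 <= (a + j).+1].

Definition lollipop_par (j : 'I_b.+1) : 'I_b.+1 := inord j.-1.

Lemma lollipop_par_val (j : 'I_b.+1) : lollipop_par j = j.-1 :> nat.
Proof. by rewrite /lollipop_par inordK //; have := ltn_ord j; lia. Qed.

Lemma lollipop_depth : rooted_depth ord0 lollipop_par (@nat_of_ord b.+1).
Proof.
split=> // j j_0; rewrite lollipop_par_val prednK // lt0n.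
by apply: contra j_0 => /eqP j0; apply/eqP/val_inj.
Qed.

Lemma lollipop_tree_edge (i j : 'I_b.+1) : j = i.+1 :> nat -> parent_rel ord0 lollipop_par i j.
Proof.
move=> ji; apply/orP; right; apply/andP; split.
  by apply/eqP => /(congr1 val) /=; lia.
by apply/eqP/ord_inj; rewrite lollipop_par_val ji.
Qed.

Lemma lollipop_decomp : has_tree_decomp L a.-1.
Proof.
have bagP u (j : 'I_b.+1) : (u \in lollipop_bag j) =
    if j == 0 :> nat then u < a else a + j <= u.+2 <= (a + j).+1 by rewrite inE.
exists 'I_b.+1, (parent_rel ord0 lollipop_par), lollipop_bag; split.
- exact: parent_rel_tree lollipop_depth.
- move=> u; case: (ltnP u a) => [lt_ua | le_au]; first by exists ord0; rewrite bagP.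
  have j_lt : u.+1 - a < b.+1 by have := ltn_ord u; lia.
  by exists (Ordinal j_lt); rewrite bagP /=; case: ifP => /eqP; lia.
- have path_edge (u v : 'I_(a + b)) : u.+1 = v -> a <= v ->
      exists j, (u \in lollipop_bag j) && (v \in lollipop_bag j).
    move=> uv le_av; have j_lt : u.+2 - a < b.+1 by have := ltn_ord v; lia.
    by exists (Ordinal j_lt); rewrite !bagP /=; case: ifP => /eqP; lia.
  move=> u v /andP[_ /orP[/orP[/andP[lt_ua lt_va] | /andP[/eqP uv le_av]] | /andP[/eqP vu le_au]]].
  + by exists ord0; rewrite !bagP lt_ua.
  + exact: path_edge.
  + by have [j] := path_edge v u vu le_au; exists j; rewrite andbC.
- move=> v i j v_i v_j; case: (eqVneq i j) => [-> | ij]; first exact: connect0.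
  have [ji | ij1] : j = i.+1 :> nat \/ i = j.+1 :> nat.
    have ij' : nat_of_ord i != j by apply: contra ij => /eqP/ord_inj ->.
    by move: v_i v_j ij'; rewrite !bagP; case: ifP => /eqP i0; case: ifP => /eqP j0; lia.
  + by apply: connect1; rewrite /= v_i v_j (lollipop_tree_edge ji).
  + by apply: connect1; rewrite /= v_i v_j parent_rel_sym (lollipop_tree_edge ij1).
- move=> j; case: (eqVneq (nat_of_ord j) 0) => [j0 | j_0].
    apply: leq_trans (card_le_vals (s := iota 0 a) _) _; last by rewrite size_iota; lia.
    by move=> u; rewrite inE j0 mem_iota.
  apply: leq_trans (card_le_vals (s := [:: a + j - 2; a + j - 1]) _) _; last by rewrite /=; lia.
  by move=> u; rewrite inE (negbTE j_0) !inE; lia.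
Qed.

Lemma lollipop_tw : tw L = a.-1.
Proof.
apply/eqP; rewrite eqn_leq (tw_le lollipop_decomp) /=.
apply: tw_ge => w decL; pose S : {set vert L} := [set u : 'I_(a + b) | u < a].
apply: (tree_decomp_width_ge (S := S) decL).
  by apply/set0Pn; exists (lshift b (Ordinal (ltnW a_gt1))); rewrite inE /= ltnW.
move=> v; rewrite inE => lt_va; pose i0 : 'I_a := Ordinal lt_va.
apply: (@leq_trans #|[set lshift b i | i in [set~ i0]]|).
  by rewrite card_imset ?cardsC1 ?card_ord //; apply: lshift_inj.
apply/subset_leq_card/subsetP => _ /imsetP[i i_i0 ->].
rewrite !inE /= ltn_ord /= /lol_adj /= ltn_ord lt_va /= andbT.
move: i_i0; rewrite !inE; apply: contra => /eqP/(congr1 val) /= vi.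
by apply/eqP/ord_inj; rewrite /= vi.
Qed.

End Lollipop.

(* A path from the clique longer than [(a + 1) b + a] meets the clique at most [a] times,
   so some clique vertex on it is followed by [b] vertices off the clique. *)
Lemma clique_form_defines_tw a b : 2 < a -> defines_sub tw (lollipop a b) (clique_form a).
Proof.
case: a => // a a_gt1; split; first exact: clique_form_sentence.
exists (a.+2 * b + a.+1 + 2) => G G_conn tw_G.
rewrite models_clique_form //; last by case: G_conn.
split=> [[f f_clique] | ]; last exact: lollipop_clique.
have [decG | [t [path_t uniq_t long_t]]] :=
  tree_decomp_or_long_path (f ord_max) (a.+2 * b + a.+1) G_conn.
  by have := tw_le decG; lia.
have count_t : count (mem (codom f)) t <= a.+1.
  case/andP: (uniq_t) => _ /(count_mem_uniq_le (codom f)).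
  by rewrite size_codom card_ord.
have fit : (count (mem (codom f)) t).+1 * b + count (mem (codom f)) t <= size t by nia.
have [u [w [r [t_uwr size_w w_off /codomP[j last_u]]]]] := run_avoiding (codom_f f ord_max) fit.
have uniq_w : uniq w.
  by move: uniq_t; rewrite cons_uniq t_uwr !cat_uniq => /and4P[_ _ _ /and3P[]].
have path_w : path (@adj G) (f j) w.
  by move: path_t; rewrite t_uwr cat_path -last_u => /andP[_]; rewrite cat_path => /andP[].
by apply: lollipop_subgraph f_clique size_w uniq_w path_w _; apply/hasPn.
Qed.

Lemma clique_form_defines_kappa a b : 2 < a -> defines_sub kappa (lollipop a b) (clique_form a).
Proof.
case: a => // a a_gt1; split; first exact: clique_form_sentence.
exists (a.+1 + b) => G G_conn kappa_G.
rewrite models_clique_form //; last by case: G_conn.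
split=> [[f f_clique] | ]; last exact: lollipop_clique.
have deg_G (v : vert G) : size (codom f) + b <= #|[set u | adj v u]|.
  by rewrite size_codom card_ord; apply: k_connected_degree (k_connected_kappa G_conn kappa_G).
have [p [size_p uniq_p path_p p_off]] := greedy_path (f ord_max) deg_G.
exact: lollipop_subgraph_last f_clique size_p uniq_p path_p p_off.
Qed.

Lemma lollipop_sub_multipartite m b N : 0 < m -> m.+1 + b <= N ->
  subgraph (lollipop m.+1 b) (multipartite m.+1 N).
Proof.
move=> m_gt0 large_N; have N_gt0 : 0 < N by lia.
have [f f_clique] := multipartite_clique m.+1 N_gt0.
have deg (v : vert (multipartite m.+1 N)) : size (codom f) + b <= #|[set u | adj v u]|.
  by rewrite size_codom card_ord; apply: leq_trans large_N (multipartite_degree _ v).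
have [p [size_p uniq_p path_p p_off]] := greedy_path (f ord_max) deg.
exact: lollipop_subgraph_last f_clique size_p uniq_p path_p p_off.
Qed.

(* Among graphs with large [pi], [multipartite m N] and [multipartite m.+1 N] are told apart
   by [f] (only the latter contains [K_(m+1)]), which no sentence of depth or width [m] can do. *)
Lemma defines_sub_lollipop_gt (pi : graph -> nat) m b f : 1 < m ->
  (forall N, 0 < N -> N <= pi (multipartite m N)) ->
  (forall N, 0 < N -> N <= pi (multipartite m.+1 N)) ->
  defines_sub pi (lollipop m.+1 b) f -> m < qdepth f /\ m < vwidth f.
Proof.
move=> m_gt1 pi_m pi_m1 [closed_f [k defines_f]].
suff no_small : ~ (qdepth f <= m \/ vwidth f <= m).
  by rewrite !ltnNge; split; apply/negP => small; apply: no_small; [left | right].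
move=> small_f; pose N := k + m + b + 1.
have N_gt0 : 0 < N by rewrite /N addn1.
have k_N : k <= N by rewrite /N; lia.
have m_N : m <= N by rewrite /N; lia.
have def_m := defines_f _ (multipartite_connected m_gt1 N_gt0) (leq_trans k_N (pi_m N N_gt0)).
have def_m1 := defines_f _ (multipartite_connected (ltnW m_gt1 : 1 < m.+1) N_gt0)
  (leq_trans k_N (pi_m1 N N_gt0)).
have same := models_multipartite_iff (ltnW m_gt1) m_N (leqnn m) (leqnSn m) closed_f small_f.
apply: (@multipartite_no_clique m N); apply: (@lollipop_clique _ _ b).
apply/def_m/same/def_m1; apply: lollipop_sub_multipartite; [lia | rewrite /N; lia].
Qed.

Lemma D_tw_lollipop a b : 2 < a -> D_pi tw (lollipop a b) = a.
Proof.
move=> a_gt2; rewrite /D_pi (@epsilon_min_value _ _ qdepth (clique_form a)) ?qdepth_clique_form //.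
  exact: clique_form_defines_tw.
case: a a_gt2 => // m m_gt1 f def_f.
by apply: (defines_sub_lollipop_gt m_gt1 _ _ def_f).1 => N N_gt0;
  apply: multipartite_tw_ge N_gt0; lia.
Qed.

Lemma W_kappa_lollipop a b : 2 < a -> W_pi kappa (lollipop a b) = a.
Proof.
move=> a_gt2; have a_gt0 : 0 < a by lia.
rewrite /W_pi (@epsilon_min_value _ _ vwidth (clique_form a)) ?vwidth_clique_form //.
  exact: clique_form_defines_kappa.
case: a a_gt2 {a_gt0} => // m m_gt1 f def_f.
by apply: (defines_sub_lollipop_gt m_gt1 _ _ def_f).2 => N N_gt0;
  apply: multipartite_kappa_ge N_gt0; lia.
Qed.

Theorem theorem6 :
  (forall a l : nat, 3 <= a <= l ->
     exists F : graph,
       [/\ connected F, nverts F = l, tw F = a.-1 & D_pi tw F <= a])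
  /\
  (forall a b : nat, 3 <= a ->
     D_pi tw (lollipop a b) = a /\ W_pi kappa (lollipop a b) = a).
Proof.
split=> [a l /andP[a_gt2 le_al] | a b a_gt2]; last first.
  by split; [apply: D_tw_lollipop | apply: W_kappa_lollipop].
exists (lollipop a (l - a)); split.
- by apply: lollipop_connected; lia.
- by rewrite /nverts card_ord; lia.
- by apply: lollipop_tw; lia.
- by rewrite D_tw_lollipop.
Qed.
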